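(* Let $K$ be an algebraically closed field of characteristic $p>0$, $p\neq 2$, and $n\geq 4$. Let $\Phi$ be a group automorphism of $\mathrm{Aut}_0 K[x_1,\ldots,x_n]$ which fixes every point of the standard torus (the automorphisms $x_i\mapsto\lambda_ix_i$, $\lambda_i\in K^\times$). Fix a multi-index $(i_2,\ldots,i_n)$ of nonnegative integers with $i_2+\cdots+i_n\geq 2$. For $\beta\in K^\times$ let $M=\beta x_2^{i_2}\cdots x_n^{i_n}$ and let $\varphi$ be the automorphism $x_1\mapsto x_1+M$, $x_k\mapsto x_k$ for $k=2,\ldots,n$. Then $\Phi(\varphi)$ is the automorphism $x_1\mapsto x_1+aM$, $x_k\mapsto x_k$ ($k\geq 2$), where $a\in K^\times$ is a constant depending only on the multi-index $(i_2,\ldots,i_n)$ (in particular independent of $\beta$).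
   Context: $\mathrm{Aut}_0 K[x_1,\ldots,x_n]$ is the group under composition of $K$-algebra automorphisms of $K[x_1,\ldots,x_n]$ preserving the origin, i.e. each $\varphi(x_i)$ has zero constant term. *)

From HB Require Import structures.
From mathcomp Require Import all_boot all_order all_algebra.
From mathcomp Require Import mpoly.
Set Implicit Arguments. Unset Strict Implicit. Unset Printing Implicit Defensive.
Import GRing.Theory.
Local Open Scope ring_scope.

(* A K-algebra endomorphism of K[x_1,...,x_n] is determined by the images of
   the variables: the tuple (phi(x_1), ..., phi(x_n)).  Variable x_{i+1} is 'X_i
   with i : 'I_n (so x_1 is the variable of index 0). *)
Definition endo (K : fieldType) (n : nat) := n.-tuple {mpoly K[n]}.

Definition endo_id (K : fieldType) (n : nat) : endo K n :=
  [tuple ('X_i : {mpoly K[n]}) | i < n].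

(* Composition (phi \o psi): (phi \o psi)(x_i) = phi(psi(x_i)) = psi_i(phi_1,...,phi_n). *)
Definition endo_comp (K : fieldType) (n : nat) (f g : endo K n) : endo K n :=
  [tuple (comp_mpoly f (tnth g i)) | i < n].

Definition is_aut (K : fieldType) (n : nat) (f : endo K n) : Prop :=
  exists g : endo K n, endo_comp f g = endo_id K n /\ endo_comp g f = endo_id K n.

Definition is_aut0 (K : fieldType) (n : nat) (f : endo K n) : Prop :=
  is_aut f /\ forall i : 'I_n, (tnth f i)@_0%MM = 0.

(* Phi is a group automorphism of Aut_0 K[x_1..x_n] (Phi given as a map on
   endomorphisms, only its restriction to Aut_0 matters). *)
Definition is_group_aut_Aut0 (K : fieldType) (n : nat) (Phi : endo K n -> endo K n) : Prop :=
  [/\ forall f, is_aut0 f -> is_aut0 (Phi f),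
      forall f g, is_aut0 f -> is_aut0 g -> Phi (endo_comp f g) = endo_comp (Phi f) (Phi g),
      forall f g, is_aut0 f -> is_aut0 g -> Phi f = Phi g -> f = g
    & forall g, is_aut0 g -> exists2 f, is_aut0 f & Phi f = g].

Definition torus_elt (K : fieldType) (n : nat) (lam : 'I_n -> K) : endo K n :=
  [tuple (lam i *: ('X_i : {mpoly K[n]})) | i < n].

Definition elem_aut (K : fieldType) (n : nat) (c : K) (mon : 'X_{1..n}) : endo K n :=
  [tuple (if val i == 0%N then 'X_i + c *: 'X_[mon] else ('X_i : {mpoly K[n]})) | i < n].

From HB Require Import structures.
From mathcomp Require Import all_boot all_order all_algebra.
From mathcomp Require Import mpoly.
From mathcomp Require Import ring zify.
Set Implicit Arguments. Unset Strict Implicit. Unset Printing Implicit Defensive.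
Import GRing.Theory.
Local Open Scope ring_scope.

(* Write e(b) for x_1 |-> x_1 + b x^M.  The torus elements commuting with e(b)
   form the subtorus T_M = {lam | lam_1 = lam^M}, and since Phi fixes the torus
   pointwise, Phi(e(b)) commutes with T_M too.  As x^M has degree at least 2 and
   does not involve x_1, comparing weights under the one-parameter subgroups of
   T_M shows that an endomorphism commuting with T_M has the shape
   x_i |-> c_i x_i + [i = 1] a x^M.  For Phi(e(b)) the maps b |-> c_i(b) are
   homomorphisms from (K, +) to K^*, hence trivial in characteristic p, so
   Phi(e(b)) = e(a(b)); injectivity of Phi gives a(b) <> 0, and conjugating by
   the torus element (b, 1, ..., 1), which sends e(1) to e(b), gives
   a(b) = b a(1). *)

Section Torus.
Variables (K : fieldType) (n : nat).
Implicit Types (lam : 'I_n -> K) (g : endo K n).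

Lemma prodr_exp_mnm1 lam i : \prod_(l < n) lam l ^+ U_(i)%MM l = lam i.
Proof.
rewrite (bigD1 i) //= mnm1E eqxx big1 ?mulr1 // => l /negbTE nli.
by rewrite mnm1E eq_sym nli.
Qed.

Lemma torus_elt1 : torus_elt (fun=> 1 : K) = endo_id K n.
Proof. by apply: eq_from_tnth => i; rewrite !tnth_mktuple scale1r. Qed.

Lemma comp_mpolyX_torus lam m :
  'X_[m] \mPo torus_elt lam = (\prod_(i < n) lam i ^+ m i) *: 'X_[m].
Proof.
rewrite comp_mpolyX [in RHS]mpolyXE_id -scaler_prod; apply: eq_bigr => i _.
by rewrite tnth_mktuple exprZn.
Qed.

Lemma mcoeff_comp_torus lam (q : {mpoly K[n]}) m :
  (q \mPo torus_elt lam)@_m = q@_m * \prod_(i < n) lam i ^+ m i.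
Proof.
rewrite comp_mpolyEX raddf_sum /=.
under eq_bigr => m' _ do rewrite comp_mpolyX_torus scalerA mcoeffZ mcoeffX.
have [qm|qm] := boolP (m \in msupp q).
  rewrite (bigD1_seq m) ?msupp_uniq //= eqxx mulr1n mulr1 [X in _ + X]big1 ?addr0 //.
  by move=> m' /negbTE ->; rewrite mulr0.
rewrite big1_seq => [|m' /andP[_ qm']]; last first.
  by case: eqP qm' => [->|]; rewrite ?(negbTE qm) ?mulr0.
by move: qm; rewrite -mcoeff_eq0 => /eqP ->; rewrite mul0r.
Qed.

Lemma tnth_comp_torus g lam i :
  tnth (endo_comp g (torus_elt lam)) i = lam i *: tnth g i.
Proof. by rewrite !tnth_mktuple comp_mpolyZ comp_mpolyXU -tnth_nth. Qed.

Lemma mcoeff_commute_torus g lam i m :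
  endo_comp (torus_elt lam) g = endo_comp g (torus_elt lam) ->
  (tnth g i)@_m * \prod_(l < n) lam l ^+ m l = lam i * (tnth g i)@_m.
Proof.
move/(congr1 (fun f => (tnth f i)@_m)) => /=.
by rewrite tnth_comp_torus mcoeffZ tnth_mktuple mcoeff_comp_torus.
Qed.

End Torus.

Lemma exists_expr_neq (K : closedFieldType) (e e' : nat) :
  e != e' -> exists2 t : K, t != 0 & t ^+ e != t ^+ e'.
Proof.
wlog lt_ee' : e e' / (e < e')%N.
  move=> W; case: (ltngtP e e') => [lt _|gt _|//]; first by apply: W; rewrite ?ltn_eqF.
  have [|t t0 ht] := W e' e gt; first by rewrite ltn_eqF.
  by exists t; rewrite // eq_sym.
move=> _; set d := (e' - e)%N.
(* A root of X^(d+1) - X - 1 is nonzero and cannot satisfy t^d = 1, in any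
   characteristic. *)
have : size ('X^(d.+1) - 'X - 1 : {poly K}) != 1%N.
  rewrite -addrA -opprD size_polyDl size_polyXn ?size_polyN ?size_XaddC //.
  by rewrite !ltnS subn_gt0.
case/closed_rootP=> t; rewrite /root !hornerE subr_eq0 subr_eq => /eqP rt.
have t0 : t != 0 by apply: contra_eq_neq rt => ->; rewrite expr0n addr0 eq_sym oner_eq0.
exists t => //; apply: contra_eq_neq rt => tee'.
have td : t ^+ d = 1.
  by apply: (mulIf (expf_neq0 e t0)); rewrite mul1r -exprD subnK ?tee' // ltnW.
by rewrite exprS td mulr1 eq_sym -subr_eq0 addrK oner_eq0.
Qed.

Section TorusElem.
Variables (K : fieldType) (n : nat) (mon : 'X_{1..n.+1}).
Hypothesis mon0 : mon ord0 = 0%N.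
Implicit Types (lam mu : 'I_n.+1 -> K) (a b : K).

Definition torus_elem lam a : endo K n.+1 :=
  [tuple lam i *: 'X_i + (if i == ord0 then a *: 'X_[mon] else 0) | i < n.+1].

Lemma tnth_torus_elem lam a i : tnth (torus_elem lam a) i =
  lam i *: 'X_i + (if i == ord0 then a *: 'X_[mon] else 0).
Proof. exact: tnth_mktuple. Qed.

Lemma eq_torus_elem lam a mu b :
  lam =1 mu -> a = b -> torus_elem lam a = torus_elem mu b.
Proof. by move=> e ->; apply: eq_from_tnth => i; rewrite !tnth_mktuple e. Qed.

Lemma torus_elem_torus lam : torus_elem lam 0 = torus_elt lam.
Proof.
by apply: eq_from_tnth => i; rewrite tnth_torus_elem tnth_mktuple scale0r if_same addr0.
Qed.

Lemma torus_elem_elem a : torus_elem (fun=> 1) a = elem_aut a mon.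
Proof.
apply: eq_from_tnth => i; rewrite tnth_torus_elem !tnth_mktuple scale1r.
have -> : (i == ord0) = (val i == 0%N) by [].
by case: ifP; rewrite ?addr0.
Qed.

Definition mon_char lam : K := \prod_(i < n.+1) lam i ^+ mon i.

Lemma mon_char1 : mon_char (fun=> 1) = 1.
Proof. by rewrite /mon_char big1 // => i _; rewrite expr1n. Qed.

Lemma mon_charV lam : mon_char (fun i => (lam i)^-1) = (mon_char lam)^-1.
Proof. by rewrite /mon_char -prodfV; apply: eq_bigr => i _; rewrite exprVn. Qed.

Lemma comp_mpolyX_mon_torus_elem lam a :
  'X_[mon] \mPo torus_elem lam a = mon_char lam *: 'X_[mon].
Proof.
rewrite comp_mpolyX mpolyXE_id -scaler_prod; apply: eq_bigr => i _.
rewrite tnth_torus_elem; case: eqP => [->|_]; first by rewrite mon0 !expr0 scale1r.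
by rewrite addr0 exprZn.
Qed.

Lemma comp_torus_elem lam a mu b :
  endo_comp (torus_elem lam a) (torus_elem mu b) =
  torus_elem (fun i => lam i * mu i) (mu ord0 * a + b * mon_char lam).
Proof.
apply: eq_from_tnth => i; rewrite tnth_mktuple !tnth_torus_elem.
rewrite comp_mpolyD comp_mpolyZ comp_mpolyXU -tnth_nth tnth_torus_elem.
case: eqP => [->|_]; last by rewrite !addr0 comp_mpoly0 addr0 scalerA mulrC.
rewrite comp_mpolyZ comp_mpolyX_mon_torus_elem scalerDr !scalerA -addrA mulrC.
by rewrite scalerDl [b * _]mulrC.
Qed.

Definition centralizes_mon_torus (g : endo K n.+1) := forall lam,
  (forall i, lam i != 0) -> lam ord0 = mon_char lam ->
  endo_comp (torus_elt lam) g = endo_comp g (torus_elt lam).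

Lemma comp_torus_elem1 lam a :
  endo_comp (torus_elt lam) (torus_elem (fun=> 1) a) = torus_elem lam (a * mon_char lam).
Proof.
rewrite -torus_elem_torus comp_torus_elem.
by apply: eq_torus_elem => [i|]; rewrite ?mulr1 // mul1r add0r.
Qed.

Lemma comp_torus_elem1_torus lam a :
  endo_comp (torus_elem (fun=> 1) a) (torus_elt lam) = torus_elem lam (lam ord0 * a).
Proof.
rewrite -torus_elem_torus comp_torus_elem.
by apply: eq_torus_elem => [i|]; rewrite ?mul1r // mul0r addr0.
Qed.

Lemma centralizes_mon_torus_elem a : centralizes_mon_torus (torus_elem (fun=> 1) a).
Proof.
by move=> lam _ lam0; rewrite comp_torus_elem1 comp_torus_elem1_torus lam0 mulrC.
Qed.

Hypothesis mdeg_mon : (2 <= mdeg mon)%N.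

Lemma mnm1_neq_mon i : (U_(i)%MM == mon) = false.
Proof. by apply/negbTE/eqP => h; move: mdeg_mon; rewrite -h mdeg1. Qed.

Lemma mcoeff_torus_elem lam a i m : (tnth (torus_elem lam a) i)@_m =
  lam i * (U_(i)%MM == m)%:R + (if i == ord0 then a * (mon == m)%:R else 0).
Proof.
rewrite tnth_torus_elem mcoeffD mcoeffZ mcoeffX; congr (_ + _).
by case: eqP => _; rewrite ?mcoeff0 // mcoeffZ mcoeffX.
Qed.

Lemma torus_elem_inj lam a mu b :
  torus_elem lam a = torus_elem mu b -> lam =1 mu /\ a = b.
Proof.
move=> e; split=> [i|].
  have := mcoeff_torus_elem lam a i U_(i); rewrite e mcoeff_torus_elem.
  by rewrite eqxx (eq_sym mon) mnm1_neq_mon mulr1n mulr0n !mulr1 !mulr0 !if_same !addr0.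
have := mcoeff_torus_elem lam a ord0 mon; rewrite e mcoeff_torus_elem.
by rewrite !eqxx mnm1_neq_mon mulr1n mulr0n !mulr1 !mulr0 !add0r.
Qed.

Lemma torus_elem_aut0 lam a : (forall i, lam i != 0) -> is_aut0 (torus_elem lam a).
Proof.
move=> lam_neq0; split; last first.
  have mdeg_gt0 m : (0 < mdeg m)%N -> (m == 0%MM) = false.
    by apply: contraTF => /eqP ->; rewrite mdeg0.
  move=> i; rewrite mcoeff_torus_elem !mdeg_gt0 ?mdeg1 ?(leq_trans _ mdeg_mon) //.
  by rewrite !mulr0 if_same addr0.
have mon_char_neq0 : mon_char lam != 0.
  by rewrite prodf_seq_neq0; apply/allP => i _; rewrite expf_neq0.
exists (torus_elem (fun i => (lam i)^-1) (- (lam ord0)^-1 * a / mon_char lam)).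
rewrite !comp_torus_elem mon_charV -torus_elt1 -torus_elem_torus.
split; apply: eq_torus_elem => [i|]; rewrite ?divff ?mulVf //.
all: by field; rewrite mon_char_neq0 lam_neq0.
Qed.

End TorusElem.

Section MonWeight.
Variables (n : nat) (mon : 'X_{1..n.+1}).
Hypotheses (mon0 : mon ord0 = 0%N) (mdeg_mon : (2 <= mdeg mon)%N).

Definition mweight (j : 'I_n.+1) (m : 'X_{1..n.+1}) : nat := m ord0 * mon j + m j.

Lemma mweight_eq_mnm1 i m :
    (forall j, j != ord0 -> mweight j m = mweight j U_(i)%MM) ->
  m = U_(i)%MM \/ i = ord0 /\ m = mon.
Proof.
rewrite /mweight; case: (eqVneq i ord0) => [->|i_neq0] wm.
- have {}wm j : j != ord0 -> (m ord0 * mon j + m j = mon j)%N.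
    by move=> j_neq0; rewrite wm // !mnm1E eqxx mul1n eq_sym (negbTE j_neq0) addn0.
  case: (ltngtP (m ord0) 1) => [|m0_gt1|m0_1].
  + rewrite ltnS leqn0 => /eqP m0_0; right; split=> //; apply/mnmP => j.
    have [->|j_neq0] := eqVneq j ord0; first by rewrite mon0.
    by have := wm j j_neq0; rewrite m0_0.
  + suff mon_eq0 : mon = 0%MM by move: mdeg_mon; rewrite mon_eq0 mdeg0.
    apply/mnmP => j; rewrite mnm0E; have [->//|j_neq0] := eqVneq j ord0.
    by have := wm j j_neq0; nia.
  + left; apply/mnmP => j; rewrite mnm1E; have [->|j_neq0] := eqVneq j ord0.
      by rewrite m0_1.
    by have := wm j j_neq0; rewrite m0_1; lia.
- have {}wm j : j != ord0 -> (m ord0 * mon j + m j = (i == j))%N.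
    by move=> j_neq0; rewrite wm // !mnm1E (negbTE i_neq0) mul0n.
  left; have [m0_0|m0_gt0] := posnP (m ord0).
    apply/mnmP => j; rewrite mnm1E; have [->|j_neq0] := eqVneq j ord0.
      by rewrite m0_0 (negbTE i_neq0).
    by have := wm j j_neq0; rewrite m0_0.
  suff : (mdeg mon <= 1)%N by rewrite leqNgt mdeg_mon.
  rewrite -(mdeg1 i) !mdegE; apply: leq_sum => j _; rewrite mnm1E.
  have [->|j_neq0] := eqVneq j ord0; first by rewrite mon0.
  by have := wm j j_neq0; case: (i == j) => /=; nia.
Qed.

End MonWeight.

Section Centralizer.
Variables (K : closedFieldType) (n : nat) (mon : 'X_{1..n.+1}).
Hypotheses (mon0 : mon ord0 = 0%N) (mdeg_mon : (2 <= mdeg mon)%N).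
Implicit Types g : endo K n.+1.

Definition torus_line (j : 'I_n.+1) (t : K) : 'I_n.+1 -> K :=
  fun l => if l == ord0 then t ^+ mon j else if l == j then t else 1.

Lemma torus_line_neq0 j t : t != 0 -> forall l, torus_line j t l != 0.
Proof.
move=> t_neq0 l; rewrite /torus_line.
by case: ifP => _; [rewrite expf_neq0 | case: ifP; rewrite ?oner_eq0].
Qed.

Lemma prod_torus_line j t (m : 'X_{1..n.+1}) : j != ord0 ->
  \prod_(l < n.+1) torus_line j t l ^+ m l = t ^+ mweight mon j m.
Proof.
move=> j_neq0; rewrite (bigD1 ord0) // (bigD1 j) //= big1 => [|l /andP[l_neq0 l_neqj]].
  by rewrite /torus_line eqxx (negbTE j_neq0) eqxx mulr1 -exprM exprD mulnC.
by rewrite /torus_line (negbTE l_neq0) (negbTE l_neqj) expr1n.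
Qed.

Lemma mon_char_torus_line j t : j != ord0 ->
  mon_char mon (torus_line j t) = torus_line j t ord0.
Proof.
by move=> j_neq0; rewrite /mon_char prod_torus_line // /mweight mon0 /torus_line eqxx.
Qed.

Lemma mweight_mcoeff_centralizer g i m j : centralizes_mon_torus mon g ->
  j != ord0 -> (tnth g i)@_m != 0 -> mweight mon j m = mweight mon j U_(i)%MM.
Proof.
move=> cg j_neq0; apply: contraTeq => /(exists_expr_neq K)[t t0 ht]; rewrite negbK.
have := cg _ (torus_line_neq0 j t0) (esym (mon_char_torus_line t j_neq0)).
move=> /(mcoeff_commute_torus i m); rewrite -[torus_line j t i]prodr_exp_mnm1.
rewrite !prod_torus_line // [_ * (tnth g i)@_m]mulrC => /eqP.
by rewrite -subr_eq0 -mulrBr mulf_eq0 subr_eq0 (negbTE ht) orbF.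
Qed.

Lemma centralizes_mon_torusE g : centralizes_mon_torus mon g ->
  g = torus_elem mon (fun i => (tnth g i)@_U_(i)%MM) ((tnth g ord0)@_mon).
Proof.
move=> cg; apply: eq_from_tnth => i; apply/mpolyP => m.
rewrite mcoeff_torus_elem //.
have [<-|m_neqU] := eqVneq U_(i)%MM m.
  by rewrite (eq_sym mon) mnm1_neq_mon // mulr1n mulr0n mulr1 mulr0 if_same addr0.
rewrite mulr0n mulr0 add0r.
have [/andP[/eqP-> /eqP->]|not_mon] := boolP ((i == ord0) && (m == mon)).
  by rewrite !eqxx mulr1n mulr1.
have -> : (if i == ord0 then (tnth g ord0)@_mon * (mon == m)%:R else 0) = 0.
  by case: eqP not_mon => //= _; rewrite eq_sym => /negbTE->; rewrite mulr0.
apply/eqP; apply: contraR not_mon => gm_neq0.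
have wm j (j_neq0 : j != ord0) := mweight_mcoeff_centralizer cg j_neq0 gm_neq0.
have [mU|[-> ->]] := mweight_eq_mnm1 mon0 mdeg_mon wm; last by rewrite !eqxx.
by rewrite mU eqxx in m_neqU.
Qed.

End Centralizer.

Section GroupAut.
Variables (K : closedFieldType) (p n : nat) (mon : 'X_{1..n.+1}).
Hypotheses (pcharK : p \in [pchar K]) (mon0 : mon ord0 = 0%N).
Hypothesis mdeg_mon : (2 <= mdeg mon)%N.
Variable Phi : endo K n.+1 -> endo K n.+1.
Hypothesis Phi_aut : is_group_aut_Aut0 Phi.
Hypothesis Phi_torus :
  forall lam, (forall i, lam i != 0) -> Phi (torus_elt lam) = torus_elt lam.

Implicit Types (f g : endo K n.+1) (lam : 'I_n.+1 -> K) (a b : K).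

Local Notation elem := (torus_elem mon (fun=> 1)).

Lemma PhiM f g :
  is_aut0 f -> is_aut0 g -> Phi (endo_comp f g) = endo_comp (Phi f) (Phi g).
Proof. by case: Phi_aut => _ + _ _; apply. Qed.

Lemma torus_aut0 lam : (forall i, lam i != 0) -> is_aut0 (torus_elt lam).
Proof. by rewrite -(torus_elem_torus mon); apply: torus_elem_aut0. Qed.

Lemma elem_aut0 a : is_aut0 (elem a).
Proof. by apply: torus_elem_aut0 => // i; apply: oner_neq0. Qed.

Lemma centralizes_mon_torus_Phi_elem a : centralizes_mon_torus mon (Phi (elem a)).
Proof.
move=> lam lam_neq0 lam0.
have [tor el] := (torus_aut0 lam_neq0, elem_aut0 a).
rewrite -(Phi_torus lam_neq0) -!PhiM //.
by rewrite (centralizes_mon_torus_elem mon0 a lam_neq0 lam0).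
Qed.

Definition Phi_elem_char a i := (tnth (Phi (elem a)) i)@_U_(i)%MM.
Definition Phi_elem_coef a := (tnth (Phi (elem a)) ord0)@_mon.

Lemma Phi_elem_torus_elem a :
  Phi (elem a) = torus_elem mon (Phi_elem_char a) (Phi_elem_coef a).
Proof. exact/centralizes_mon_torusE/centralizes_mon_torus_Phi_elem. Qed.

Lemma Phi_elem0 : Phi (elem 0) = elem 0.
Proof. by rewrite !torus_elem_torus Phi_torus // => i; apply: oner_neq0. Qed.

Lemma Phi_elem_char0 i : Phi_elem_char 0 i = 1.
Proof.
have := Phi_elem_torus_elem 0; rewrite Phi_elem0.
by case/(torus_elem_inj mdeg_mon) => /(_ i) <-.
Qed.

Lemma Phi_elem_charD a b i :
  Phi_elem_char (a + b) i = Phi_elem_char a i * Phi_elem_char b i.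
Proof.
have : elem (a + b) = endo_comp (elem a) (elem b).
  rewrite comp_torus_elem // mon_char1.
  by apply: eq_torus_elem => [l|]; rewrite ?mulr1 ?mul1r.
move/(congr1 Phi); rewrite (PhiM (elem_aut0 a) (elem_aut0 b)).
rewrite !Phi_elem_torus_elem comp_torus_elem //.
by case/(torus_elem_inj mdeg_mon) => ->.
Qed.

Lemma Phi_elem_charMn a k i : Phi_elem_char (a *+ k) i = Phi_elem_char a i ^+ k.
Proof.
elim: k => [|k IHk]; first by rewrite mulr0n Phi_elem_char0.
by rewrite mulrS Phi_elem_charD IHk exprS.
Qed.

Lemma Phi_elem_char1 a i : Phi_elem_char a i = 1.
Proof.
(* p-th roots of unity are trivial in characteristic p, as Frobenius is injective. *)
apply: (fmorph_inj (pFrobenius_aut pcharK)); rewrite rmorph1 [LHS]pFrobenius_autE.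
by rewrite -Phi_elem_charMn -mulr_natr (pcharf0 pcharK) mulr0 Phi_elem_char0.
Qed.

Lemma Phi_elem a : Phi (elem a) = elem (Phi_elem_coef a).
Proof.
by rewrite Phi_elem_torus_elem; apply: eq_torus_elem => // i; apply: Phi_elem_char1.
Qed.

Lemma Phi_elem_coef_neq0 a : a != 0 -> Phi_elem_coef a != 0.
Proof.
apply: contra_neq => coef_eq0; case: Phi_aut => _ _ Phi_inj _.
have /(torus_elem_inj mdeg_mon)[_ //] : elem a = elem 0.
by apply: Phi_inj (elem_aut0 a) (elem_aut0 0) _; rewrite Phi_elem0 Phi_elem coef_eq0.
Qed.

Lemma Phi_elem_coefZ b : b != 0 -> Phi_elem_coef b = b * Phi_elem_coef 1.
Proof.
move=> b_neq0; pose lam (l : 'I_n.+1) := if l == ord0 then b else 1.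
have lam_neq0 l : lam l != 0 by rewrite /lam; case: ifP; rewrite ?oner_eq0.
have lam_mon : mon_char mon lam = 1.
  rewrite /mon_char big1 // => l _; rewrite /lam.
  by case: eqP => [->|_]; rewrite ?mon0 ?expr1n.
have lam0 : lam ord0 = b by rewrite /lam eqxx.
(* Conjugating by the torus element (b, 1, ..., 1) turns x_1 + x^mon into x_1 + b x^mon. *)
have conj : endo_comp (torus_elt lam) (elem b) = endo_comp (elem 1) (torus_elt lam).
  by rewrite (comp_torus_elem1 mon0) (comp_torus_elem1_torus mon0) lam_mon lam0 mulr1.
move/(congr1 Phi): conj.
rewrite (PhiM (torus_aut0 lam_neq0) (elem_aut0 b)).
rewrite (PhiM (elem_aut0 1) (torus_aut0 lam_neq0)).
rewrite Phi_torus // !Phi_elem.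
rewrite (comp_torus_elem1 mon0) (comp_torus_elem1_torus mon0) lam_mon lam0 mulr1.
by case/(torus_elem_inj mdeg_mon).
Qed.

Lemma Phi_elem_scale :
  exists2 c : K, c != 0 & forall b, b != 0 -> Phi (elem b) = elem (c * b).
Proof.
exists (Phi_elem_coef 1); first exact/Phi_elem_coef_neq0/oner_neq0.
by move=> b b_neq0; rewrite Phi_elem Phi_elem_coefZ // mulrC.
Qed.

End GroupAut.

Theorem mainTheorem3 (K : closedFieldType) (p : nat) (n : nat)
  (hp : p \in [pchar K]) (hp2 : p != 2%N) (hn : (4 <= n)%N)
  (Phi : endo K n -> endo K n) (hPhi : is_group_aut_Aut0 Phi)
  (htorus : forall lam : 'I_n -> K, (forall i, lam i != 0) ->
              Phi (torus_elt lam) = torus_elt lam)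
  (mon : 'X_{1..n})
  (hmon1 : forall i : 'I_n, val i = 0%N -> mon i = 0%N)
  (hmon2 : (2 <= mdeg mon)%N) :
  exists2 a : K, a != 0 &
    forall beta : K, beta != 0 -> Phi (elem_aut beta mon) = elem_aut (a * beta) mon.
Proof.
case: n hn Phi hPhi htorus mon hmon1 hmon2 => [//|n] _ Phi hPhi htorus mon hmon1 hmon2.
have [|c c_neq0 Phi_elem] := Phi_elem_scale hp (hmon1 ord0 _) hmon2 hPhi htorus => //.
by exists c => // b b_neq0; rewrite -!torus_elem_elem Phi_elem.
Qed.
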